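(* Let $N\ge 8$ and let $\alpha=1/4$, $a=3/2$, $\hat a=a/2=3/4$, $\alpha_1=2$, $a_1=-5/2$, $b_1=2$, $c_1=1/2$. Define the $N\times N$ matrices $A$ and $B$ by the following rows (all unspecified entries are zero): - row $1$: $A_{11}=1$, $A_{12}=\alpha_1$; $B_{11}=a_1$, $B_{12}=b_1$, $B_{13}=c_1$; - row $N$: $A_{NN}=1$, $A_{N,N-1}=\alpha_1$; $B_{NN}=-a_1$, $B_{N,N-1}=-b_1$, $B_{N,N-2}=-c_1$; - rows $j=2,\ldots,N-1$: $A_{j,j-1}=A_{j,j+1}=\alpha$, $A_{jj}=1$; $B_{j,j-1}=-\hat a$, $B_{j,j+1}=\hat a$. (So $A\mathbf f'=B\mathbf f$ is the fourth-order Padé scheme $\alpha f'_{j-1}+f'_j+\alpha f'_{j+1}=\tfrac a2(f_{j+1}-f_{j-1})$ at interior points, closed by the third-order one-sided schemes $f'_1+\alpha_1f'_2=a_1f_1+b_1f_2+c_1f_3$ and $f'_N+\alpha_1f'_{N-1}=-(a_1f_N+b_1f_{N-1}+c_1f_{N-2})$, with unit grid spacing in the index variable.) Define $\widehat{\mathbf w}\in\mathbb R^N$ by $\widehat w_1=\widehat w_N=3/8$, $\widehat w_2=\widehat w_{N-1}=7/6$, $\widehat w_3=\widehat w_{N-2}=23/24$, and $\widehat w_j=1$ for $4\le j\le N-3$. Then: (i) the vector $\mathbf w$ with $w_1=w_N=3/8$, $w_2=w_{N-1}=3/4$, and $w_j=1$ for $3\le j\le N-2$ satisfies $\mathbf w^T\mathbf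 b_i=0$ for all $2\le i\le N-1$ (where $\mathbf b_i$ is the $i$-th column of $B$), $\mathbf w^T\mathbf b_1=-3/2$, $\mathbf w^T\mathbf b_N=3/2$, and $\widehat{\mathbf w}^T=-\mathbf w^TA/(\mathbf w^T\mathbf b_1)$; (ii) consequently, for any positive $h_1,\ldots,h_N$ and any functions $u(t),f(t)\in\mathbb R^N$ such that $\mathbf U=(h_1u_1,\ldots,h_Nu_N)^T$ satisfies $A\,d\mathbf U/dt+Bf=0$, one has $$\frac{d}{dt}\sum_{j=1}^N\widehat w_j\,h_j\,u_j=f_1-f_N .$$
   Context: Here $h_i^{-1}=(d\xi/dx)_i$ is the grid metric factor for a mapped grid $x(\xi)$ with $\xi_i=i$, and the semi-discrete system $A\,d\mathbf U/dt+Bf=0$ is the Padé spatial discretization of $\partial_t u+\partial_x f=0$. The identity in (ii) is a discrete analogue of $\frac{d}{dt}\int_0^L u\,dx=f(0)-f(L)$. *)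

From HB Require Import structures.
From mathcomp Require Import all_boot all_order all_algebra.
From mathcomp Require Import all_classical all_reals all_analysis.
Set Implicit Arguments. Unset Strict Implicit. Unset Printing Implicit Defensive.
Import Order.TTheory GRing.Theory Num.Theory.
Local Open Scope ring_scope.

(* Indices are 0-based: paper index j (1..N) corresponds to nat j-1 (0..N-1). *)
Section Pade.
Variable R : realType.

Definition alpha : R := 1 / 4.
Definition a_int : R := 3 / 2.
Definition ahat : R := a_int / 2.
Definition alpha1 : R := 2.
Definition a1 : R := - (5 / 2).
Definition b1 : R := 2.
Definition c1 : R := 1 / 2.

Definition padeA_e (N i j : nat) : R :=
  if i == 0%N then (if j == 0%N then 1 else if j == 1%N then alpha1 else 0)
  else if i == N.-1 then
    (if j == N.-1 then 1 else if j == N.-2 then alpha1 else 0)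
  else if j == i then 1
  else if (j.+1 == i) || (j == i.+1) then alpha else 0.

Definition padeB_e (N i j : nat) : R :=
  if i == 0%N then
    (if j == 0%N then a1 else if j == 1%N then b1 else if j == 2%N then c1 else 0)
  else if i == N.-1 then
    (if j == N.-1 then - a1 else if j == N.-2 then - b1
     else if j == (N - 3)%N then - c1 else 0)
  else if j.+1 == i then - ahat
  else if j == i.+1 then ahat else 0.

Definition padeA (N : nat) : 'M[R]_N := \matrix_(i < N, j < N) padeA_e N i j.
Definition padeB (N : nat) : 'M[R]_N := \matrix_(i < N, j < N) padeB_e N i j.

Definition w_e (N j : nat) : R :=
  if (j == 0%N) || (j == N.-1) then 3 / 8
  else if (j == 1%N) || (j == N.-2) then 3 / 4
  else 1.

Definition what_e (N j : nat) : R :=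
  if (j == 0%N) || (j == N.-1) then 3 / 8
  else if (j == 1%N) || (j == N.-2) then 7 / 6
  else if (j == 2%N) || (j == (N - 3)%N) then 23 / 24
  else 1.

Definition wrow (N : nat) : 'rV[R]_N := \row_(j < N) w_e N j.
Definition whatrow (N : nat) : 'rV[R]_N := \row_(j < N) what_e N j.

End Pade.

From HB Require Import structures.
From mathcomp Require Import all_boot all_order all_algebra.
From mathcomp Require Import all_classical all_reals all_analysis.
From mathcomp Require Import zify lra.
Set Implicit Arguments. Unset Strict Implicit. Unset Printing Implicit Defensive.
Import Order.TTheory GRing.Theory Num.Theory.
Local Open Scope ring_scope.

(* Part (i) is a finite computation: because A and B are banded, each column
   sum of w^T A or w^T B involves at most three rows, and only the columns
   within three of a boundary differ from the interior pattern.  Part (ii)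
   follows by multiplying A dU/dt + B f = 0 on the left by w^T: since
   w^T A = (3/2) \hat w^T and w^T B = (3/2) (e_N - e_1)^T, this gives
   (3/2) d/dt (\hat w^T U) = (3/2) (f_1 - f_N). *)

Lemma big_ord_support_seq (V : nmodType) (N : nat) (G : nat -> V) (S : seq nat) :
  uniq S -> all (fun i => (i < N)%N) S ->
  (forall i, (i < N)%N -> i \notin S -> G i = 0) ->
  \sum_(i < N) G i = \sum_(i <- S) G i.
Proof.
move=> uniqS SltN G0.
rewrite -(big_mkord xpredT) (bigID (mem S)) /=.
rewrite [X in _ + X]big1_seq ?addr0; last first.
  by move=> i /andP[iNS]; rewrite mem_index_iota => /andP[_ iN]; apply: G0.
rewrite -big_filter; apply/perm_big/uniq_perm => //.
  by rewrite filter_uniq // iota_uniq.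
move=> i; rewrite mem_filter mem_index_iota /=.
by case iS: (i \in S) => //=; move/allP: SltN => /(_ i iS) ->.
Qed.

Lemma mulmx_conservation (R : pzRingType) (n p : nat) (A B : 'M[R]_n)
    (X Y : 'M[R]_(n, p)) (w v : 'rV[R]_n) (c : R) :
  w *m A = c *: v -> A *m X + B *m Y = 0 -> c *: (v *m X) = - (w *m B *m Y).
Proof.
move=> wA XY; apply/eqP; rewrite -addr_eq0.
by rewrite scalemxAl -wA -!mulmxA -mulmxDr XY mulmx0.
Qed.

Lemma is_derive_weighted_sum (R : realType) (n : nat) (c : 'I_n -> R)
    (g : 'I_n -> R -> R) (t : R) :
  (forall j, derivable (g j) t 1) ->
  is_derive t 1 (fun s => \sum_(j < n) c j * g j s)
            (\sum_(j < n) c j * derive1 (g j) t).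
Proof.
move=> dg.
have -> : (fun s => \sum_(j < n) c j * g j s) = \sum_(j < n) (c j \*: g j).
  by apply/funext => s; rewrite fct_sumE.
apply: is_derive_sum => j; rewrite derive1E.
exact: is_deriveZ (derivableP (dg j)).
Qed.

Section PadeWeights.
Variables (R : realType) (N : nat).
Hypothesis N_ge8 : (8 <= N)%N.

Lemma padeB_e_band i j : padeB_e R N i j != 0 ->
  [|| (i == 0%N) && (j <= 2)%N, (i == N.-1) && (N - 3 <= j)%N,
      j.+1 == i | j == i.+1].
Proof.
by rewrite /padeB_e; repeat case: ifP => ?; rewrite ?eqxx //; lia.
Qed.

Lemma padeA_e_band i j : padeA_e R N i j != 0 ->
  [|| (i == 0%N) && (j <= 1)%N, (i == N.-1) && (N.-2 <= j)%N,
      j == i, j.+1 == i | j == i.+1].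
Proof.
by rewrite /padeA_e; repeat case: ifP => ?; rewrite ?eqxx //; lia.
Qed.

Ltac decide_ifs := repeat match goal with |- context [if ?b then _ else _] =>
  first [ rewrite (_ : b = true); last by lia
        | rewrite (_ : b = false); last by lia ] end.

(* Restricts a column sum to the rows [S] allowed by the band lemma [band],
   then evaluates the remaining explicit terms. *)
Ltac column_sum entry j S band :=
  rewrite (@big_ord_support_seq _ _ (fun i => w_e R N i * entry R N i j) S);
  [ rewrite !big_cons big_nil /w_e /padeB_e /padeA_e /what_e; decide_ifs;
    rewrite /alpha /ahat /a_int /alpha1 /a1 /b1 /c1; lra
  | by rewrite /= ?inE; lia
  | by rewrite /=; lia
  | let kS := fresh "kS" in
    move=> ? ? kS; rewrite !inE in kS;
    match goal with |- _ * ?e = 0 =>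
      have [->|/band band_e] := eqVneq e 0; [by rewrite mulr0 | exfalso; lia] end ].

Lemma column_cases j : (j < N)%N ->
  (j = 0 \/ j = 1 \/ j = 2 \/ (3 <= j <= N - 4)
   \/ j = N - 3 \/ j = N - 2 \/ j = N - 1)%N.
Proof. by move=> jN; lia. Qed.

Lemma w_padeB_column j : (j < N)%N ->
  \sum_(i < N) w_e R N i * padeB_e R N i j =
  if j == 0%N then - (3 / 2) else if j == N.-1 then 3 / 2 else 0.
Proof.
move=> /column_cases[jE|[jE|[jE|[jE|[jE|[jE|jE]]]]]].
- by column_sum padeB_e j [:: 0; 1]%N padeB_e_band.
- by column_sum padeB_e j [:: 0; 2]%N padeB_e_band.
- by column_sum padeB_e j [:: 0; 1; 3]%N padeB_e_band.
- by column_sum padeB_e j [:: j.-1; j.+1]%N padeB_e_band.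
- by column_sum padeB_e j [:: N - 4; N - 2; N - 1]%N padeB_e_band.
- by column_sum padeB_e j [:: N - 3; N - 1]%N padeB_e_band.
- by column_sum padeB_e j [:: N - 2; N - 1]%N padeB_e_band.
Qed.

Lemma w_padeA_column j : (j < N)%N ->
  \sum_(i < N) w_e R N i * padeA_e R N i j = 3 / 2 * what_e R N j.
Proof.
move=> /column_cases[jE|[jE|[jE|[jE|[jE|[jE|jE]]]]]].
- by column_sum padeA_e j [:: 0; 1]%N padeA_e_band.
- by column_sum padeA_e j [:: 0; 1; 2]%N padeA_e_band.
- by column_sum padeA_e j [:: 1; 2; 3]%N padeA_e_band.
- by column_sum padeA_e j [:: j.-1; j; j.+1]%N padeA_e_band.
- by column_sum padeA_e j [:: N - 4; N - 3; N - 2]%N padeA_e_band.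
- by column_sum padeA_e j [:: N - 3; N - 2; N - 1]%N padeA_e_band.
- by column_sum padeA_e j [:: N - 2; N - 1]%N padeA_e_band.
Qed.

Lemma wrow_padeB_entry (j : 'I_N) : (wrow R N *m padeB R N) 0 j =
  if val j == 0%N then - (3 / 2) else if val j == N.-1 then 3 / 2 else 0.
Proof.
by rewrite !mxE; under eq_bigr do rewrite !mxE; apply: w_padeB_column.
Qed.

Lemma wrow_padeA : wrow R N *m padeA R N = 3 / 2 *: whatrow R N.
Proof.
apply/rowP => j; rewrite !mxE; under eq_bigr do rewrite !mxE.
exact: w_padeA_column.
Qed.

Lemma wrow_padeB (i0 iN : 'I_N) : val i0 = 0%N -> val iN = N.-1 ->
  wrow R N *m padeB R N = 3 / 2 *: ('e_iN - 'e_i0).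
Proof.
move=> i0E iNE; apply/rowP => j.
rewrite wrow_padeB_entry !mxE -!val_eqE /= i0E iNE.
by case: eqP => [->|_]; case: eqP => [|_]; first lia; rewrite /=; lra.
Qed.

End PadeWeights.

Theorem mainTheorem2 (R : realType) (N : nat) (HN : (8 <= N)%N) :
  (* (i) *)
  ((forall i : 'I_N, (0 < val i < N.-1)%N ->
       (wrow R N *m padeB R N) 0 i = 0)
   /\ (forall i : 'I_N, val i = 0%N -> (wrow R N *m padeB R N) 0 i = - (3 / 2))
   /\ (forall i : 'I_N, val i = N.-1 -> (wrow R N *m padeB R N) 0 i = 3 / 2)
   /\ (forall i0 : 'I_N, val i0 = 0%N ->
         whatrow R N = - ((wrow R N *m padeB R N) 0 i0)^-1 *: (wrow R N *m padeA R N)))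
  /\
  (* (ii) *)
  (forall (h : 'I_N -> R) (u f : 'I_N -> R -> R),
     (forall j, 0 < h j) ->
     (forall j t, derivable (u j) t 1) ->
     (forall t : R,
        padeA R N *m (\col_j (derive1 (fun s => h j * u j s) t))
        + padeB R N *m (\col_j f j t) = 0) ->
     forall (t : R) (i0 iN : 'I_N), val i0 = 0%N -> val iN = N.-1 ->
       is_derive t 1 (fun s => \sum_(j < N) what_e R N j * h j * u j s)
                 (f i0 t - f iN t)).
Proof.
have wB := wrow_padeB_entry R HN.
split.
  split.
    move=> i /andP[i_gt0 i_lt]; rewrite wB.
    by case: ifP => [/eqP|_]; [lia | case: ifP => [/eqP|] //; lia].
  split; first by move=> i iE; rewrite wB iE.
  split; first by move=> i iE; rewrite wB iE ifN_eq ?eqxx //; apply/eqP; lia.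
  move=> i0 i0E; rewrite wB i0E (wrow_padeA R HN) invrN opprK scalerA.
  by rewrite mulVf ?scale1r //; lra.
move=> h u f _ du UfE t i0 iN i0E iNE.
have conservation := mulmx_conservation (wrow_padeA R HN) (UfE t).
rewrite (wrow_padeB R HN i0E iNE) -scalemxAl mulmxBl -!rowE in conservation.
have {conservation} := congr1 (fun M : 'M[R]_1 => M 0 0) conservation.
rewrite !mxE; under eq_bigr do rewrite !mxE.
move=> conservation.
have -> : (fun s => \sum_(j < N) what_e R N j * h j * u j s) =
          (fun s => \sum_(j < N) what_e R N j * (h j * u j s)).
  by apply/funext => s; apply: eq_bigr => j _; rewrite mulrA.
apply: is_derive_eq.
  by apply: is_derive_weighted_sum => j; apply: derivableZ.
by rewrite /=; lra.
Qed.
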